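(* Let $(\Psi_d)_d$ be a constraint structure that is both a meet and a lift constraint structure, let $(\le,\wedge,P)$ be a decent triple on it, and let $(R^d)_d$ be a constraint-refining predicate that relates to a constraint-producing predicate $(\models^d)_d$. If $\vdash^{d}\Gamma\to\sigma'$ is derivable in DI, then for every $\sigma\in\Psi_d$ such that $P(\sigma\wedge\sigma')$, there exists $\sigma''\in\Psi_d$ such that $\sigma''\simeq\sigma\wedge\sigma'$ and $\sigma\to\vdash^{d}\Gamma\to\sigma''$ is derivable in SDI.
   Context: Formulas are first-order formulas in negation normal form, built from literals using $\wedge,\vee,\forall,\exists$. Eigenvariables (written $\bar x$) and meta-variables (written $X$) are two disjoint infinite supplies of variables. Domains: there is an initial domain $d_0$; for a domain $d$ and an eigenvariable $\bar x$ (resp. meta-variable $X$) not declared in $d$, $d;\bar x$ (resp. $d;X$) is a domain declaring additionally $\bar x$ (resp. $X$); all domains arise this way. A formula of domain $d$ is one whose free variables are eigenvariables or meta-variables declared in $d$; a context of domain $d$ is a finite multiset of formulas of domain $d$; $\Gamma_{lit}$ is the set of literals that are elements of $\Gamma$. A constraint structure consists of a set $\Psi_d$ for each domain $d$, with $\Psi_{d;\bar x}=\Psi_d$, and projection maps $\Psi_{d;X}\to\Psi_d$, $\sigma\mapsto\sigma_\downarrow$; a meet constraint structure additionally has a binary operation $\wedge$ on each $\Psi_d$; a lift constraint structure additionally has maps $\Psi_d\to\Psi_{d;X}$, $\sigma\mapsto\sigma^\uparrow$. A triple $(\le,\wedge,P)$, where $\le$ is a family of preorders on the $\Psi_d$,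 $\wedge$ the meet operations, and $P$ a family of predicates on the $\Psi_d$, is decent if, writing $\simeq$ for the equivalence relation generated by $\le$: (D1) for all $\sigma,\sigma'\in\Psi_d$, $\sigma\wedge\sigma'$ is a greatest lower bound of $\sigma,\sigma'$ for $\le$; (D2) for all $\sigma\in\Psi_d$ and $\sigma',\sigma''\in\Psi_{d;X}$, $\sigma''\simeq\sigma^\uparrow\wedge\sigma'$ implies $\sigma''_\downarrow\simeq\sigma\wedge\sigma'_\downarrow$; (P1) for all $\sigma\in\Psi_{d;X}$, $P(\sigma)\iff P(\sigma_\downarrow)$; (P2) for all $\sigma,\sigma'\in\Psi_d$, $P(\sigma)$ and $\sigma\le\sigma'$ imply $P(\sigma')$. A constraint-producing predicate is a family of relations $\mathcal A\models^d\sigma$ between sets $\mathcal A$ of literals of domain $d$ and $\sigma\in\Psi_d$. A constraint-refining predicate is a family of relations $R^d(\sigma,\mathcal A,\sigma')$ between sets $\mathcal A$ of literals of domain $d$ and pairs $\sigma,\sigma'\in\Psi_d$. It relates to $(\models^d)_d$ if for all $d$, all sets $\mathcal A$ of literals of domain $d$ and all $\sigma\in\Psi_d$: (A1) for all $\sigma'\in\Psi_d$, $R^d(\sigma,\mathcal A,\sigma')$ implies there is $\sigma''\in\Psi_d$ with $\sigma'\simeq\sigma\wedge\sigma''$, $P(\sigma\wedge\sigma'')$ and $\mathcal A\models^d\sigma''$; (A2) for all $\sigma'\in\Psi_d$, if $P(\sigma\wedge\sigma')$ and $\mathcal A\models^d\sigma'$ then there is $\sigma''\in\Psi_d$ with $\sigma''\simeq\sigma\wedge\sigma'$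 and $R^d(\sigma,\mathcal A,\sigma'')$. System DI derives $\vdash^d\Gamma\to\sigma$ ($\Gamma$, $\sigma$ of domain $d$) by: $\vdash^d\Gamma\to\sigma$ if $\Gamma_{lit}\models^d\sigma$; from $\vdash^d\Gamma,A\to\sigma$ and $\vdash^d\Gamma,B\to\sigma'$ infer $\vdash^d\Gamma,A\wedge B\to\sigma\wedge\sigma'$; from $\vdash^d\Gamma,A,B\to\sigma$ infer $\vdash^d\Gamma,A\vee B\to\sigma$; from $\vdash^{d;X}\Gamma,A[x:=X],\exists xA\to\sigma$ ($X$ fresh meta-variable) infer $\vdash^d\Gamma,\exists xA\to\sigma_\downarrow$; from $\vdash^{d;\bar x}\Gamma,A[x:=\bar x]\to\sigma$ ($\bar x$ fresh eigenvariable) infer $\vdash^d\Gamma,\forall xA\to\sigma$. System SDI derives $\sigma\to\vdash^d\Gamma\to\sigma'$ ($\Gamma,\sigma,\sigma'$ of domain $d$) by: $\sigma\to\vdash^d\Gamma\to\sigma'$ if $R^d(\sigma,\Gamma_{lit},\sigma')$; from $\sigma\to\vdash^d\Gamma,A,B\to\sigma'$ infer $\sigma\to\vdash^d\Gamma,A\vee B\to\sigma'$; for $i\in\{0,1\}$, from $\sigma\to\vdash^d\Gamma,A_i\to\sigma''$ and $\sigma''\to\vdash^d\Gamma,A_{1-i}\to\sigma'$ infer $\sigma\to\vdash^d\Gamma,A_0\wedge A_1\to\sigma'$; from $\sigma^\uparrow\to\vdash^{d;X}\Gamma,A[x:=X],\exists xA\to\sigma'$ ($X$ fresh meta-variable)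 infer $\sigma\to\vdash^d\Gamma,\exists xA\to\sigma'_\downarrow$; from $\sigma\to\vdash^{d;\bar x}\Gamma,A[x:=\bar x]\to\sigma'$ ($\bar x$ fresh eigenvariable) infer $\sigma\to\vdash^d\Gamma,\forall xA\to\sigma'$. *)

From Stdlib Require Import List Arith Permutation.
Import ListNotations.

Inductive var : Type :=
| VBound (x : nat)
| VEig (n : nat)
| VMeta (n : nat).

Inductive term : Type :=
| TVar (v : var)
| TFun (f : nat) (args : list term).

Inductive literal : Type :=
| LPos (p : nat) (args : list term)
| LNeg (p : nat) (args : list term).

(* formulas in negation normal form *)
Inductive formula : Type :=
| FLit (l : literal)
| FAnd (A B : formula)
| FOr (A B : formula)
| FAll (x : nat) (A : formula)
| FEx (x : nat) (A : formula).

(* substitution of a term for the bound variable x; it is only used with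
   t an eigenvariable or meta-variable, so no capture can occur *)
Fixpoint subst_term (x : nat) (t : term) (u : term) : term :=
  match u with
  | TVar (VBound y) => if Nat.eqb x y then t else u
  | TVar _ => u
  | TFun f args => TFun f (map (subst_term x t) args)
  end.

Definition subst_lit (x : nat) (t : term) (l : literal) : literal :=
  match l with
  | LPos p args => LPos p (map (subst_term x t) args)
  | LNeg p args => LNeg p (map (subst_term x t) args)
  end.

Fixpoint subst (x : nat) (t : term) (A : formula) : formula :=
  match A with
  | FLit l => FLit (subst_lit x t l)
  | FAnd B C => FAnd (subst x t B) (subst x t C)
  | FOr B C => FOr (subst x t B) (subst x t C)
  | FAll y B => if Nat.eqb x y then A else FAll y (subst x t B)
  | FEx y B => if Nat.eqb x y then A else FEx y (subst x t B)
  end.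

Fixpoint fv_term (u : term) : list var :=
  match u with
  | TVar v => [v]
  | TFun _ args => flat_map fv_term args
  end.

Definition fv_lit (l : literal) : list var :=
  match l with
  | LPos _ args => flat_map fv_term args
  | LNeg _ args => flat_map fv_term args
  end.

Definition not_bound (x : nat) (v : var) : bool :=
  match v with VBound y => negb (Nat.eqb x y) | _ => true end.

Fixpoint fv (A : formula) : list var :=
  match A with
  | FLit l => fv_lit l
  | FAnd B C => fv B ++ fv C
  | FOr B C => fv B ++ fv C
  | FAll x B => filter (not_bound x) (fv B)
  | FEx x B => filter (not_bound x) (fv B)
  end.

Inductive decl : Type :=
| DEig (n : nat)
| DMeta (n : nat).

(* d;v is represented as (v :: d); the initial domain d0 is [] *)
Definition domain := list decl.

Inductive wf_dom : domain -> Prop :=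
| wf_nil : wf_dom []
| wf_cons (d : domain) (v : decl) : wf_dom d -> ~ In v d -> wf_dom (v :: d).

Definition declared (d : domain) (v : var) : Prop :=
  match v with
  | VBound _ => False
  | VEig n => In (DEig n) d
  | VMeta n => In (DMeta n) d
  end.

Definition formula_of_dom (d : domain) (A : formula) : Prop :=
  forall v, In v (fv A) -> declared d v.

Definition lit_of_dom (d : domain) (l : literal) : Prop :=
  forall v, In v (fv_lit l) -> declared d v.

Definition ctx_of_dom (d : domain) (G : list formula) : Prop :=
  forall A, In A G -> formula_of_dom d A.

Definition litset := literal -> Prop.

Definition litset_of_dom (d : domain) (S : litset) : Prop :=
  forall l, S l -> lit_of_dom d l.

Definition lits (G : list formula) : litset := fun l => In (FLit l) G.

(* Psi_{d;\bar x} = Psi_d is built in: the family is given on "constraint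
   indices" and Psi_d := Psi (cdom d), where cdom drops the trailing
   eigenvariable declarations. Every family satisfying Psi_{d;\bar x} = Psi_d
   is of this form. *)
Fixpoint cdom (d : domain) : domain :=
  match d with
  | [] => []
  | DEig _ :: d' => cdom d'
  | DMeta n :: d' => DMeta n :: d'
  end.

Record mlcstruct : Type := {
  Psi : domain -> Type;
  proj : forall (d : domain) (X : nat), Psi (DMeta X :: d) -> Psi (cdom d);
  meet : forall (e : domain), Psi e -> Psi e -> Psi e;
  lift : forall (d : domain) (X : nat), Psi (cdom d) -> Psi (DMeta X :: d)
}.

Definition PsiD (C : mlcstruct) (d : domain) : Type := Psi C (cdom d).

Section Constraints.
Variable C : mlcstruct.
Variable le : forall e, Psi C e -> Psi C e -> Prop.
Variable P : forall e, Psi C e -> Prop.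

Definition ceqv (e : domain) (s s' : Psi C e) : Prop :=
  le e s s' /\ le e s' s.

Definition preorders : Prop :=
  forall d, wf_dom d ->
    (forall s : PsiD C d, le (cdom d) s s) /\
    (forall s1 s2 s3 : PsiD C d,
        le (cdom d) s1 s2 -> le (cdom d) s2 s3 -> le (cdom d) s1 s3).

Definition decent : Prop :=
  preorders /\
  (forall d, wf_dom d -> forall s s' : PsiD C d,
      le _ (meet C _ s s') s /\ le _ (meet C _ s s') s' /\
      (forall t : PsiD C d, le _ t s -> le _ t s' -> le _ t (meet C _ s s'))) /\
  (forall d X, wf_dom (DMeta X :: d) ->
     forall (s : PsiD C d) (s' s'' : Psi C (DMeta X :: d)),
       ceqv _ s'' (meet C _ (lift C d X s) s') ->
       ceqv _ (proj C d X s'') (meet C _ s (proj C d X s'))) /\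
  (forall d X, wf_dom (DMeta X :: d) ->
     forall s : Psi C (DMeta X :: d), P _ s <-> P _ (proj C d X s)) /\
  (forall d, wf_dom d -> forall s s' : PsiD C d,
      P _ s -> le _ s s' -> P _ s').

Variable R : forall d : domain, PsiD C d -> litset -> PsiD C d -> Prop.
Variable models : forall d : domain, litset -> PsiD C d -> Prop.

Definition relates : Prop :=
  forall d, wf_dom d -> forall (A : litset), litset_of_dom d A ->
  forall s : PsiD C d,
    (forall s' : PsiD C d, R d s A s' ->
       exists s'' : PsiD C d,
         ceqv _ s' (meet C _ s s'') /\ P _ (meet C _ s s'') /\ models d A s'') /\
    (forall s' : PsiD C d, P _ (meet C _ s s') -> models d A s' ->
       exists s'' : PsiD C d, ceqv _ s'' (meet C _ s s') /\ R d s A s'').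

(* contexts are multisets: the principal formula is matched up to permutation *)
Inductive DI : forall d : domain, list formula -> PsiD C d -> Prop :=
| DI_ax (d : domain) (G : list formula) (s : PsiD C d) :
    models d (lits G) s -> DI d G s
| DI_and (d : domain) (D G : list formula) (A B : formula) (s s' : PsiD C d) :
    Permutation D (FAnd A B :: G) ->
    DI d (A :: G) s -> DI d (B :: G) s' -> DI d D (meet C _ s s')
| DI_or (d : domain) (D G : list formula) (A B : formula) (s : PsiD C d) :
    Permutation D (FOr A B :: G) ->
    DI d (A :: B :: G) s -> DI d D s
| DI_ex (d : domain) (D G : list formula) (x X : nat) (A : formula)
        (s : Psi C (DMeta X :: d)) :
    Permutation D (FEx x A :: G) -> ~ In (DMeta X) d ->
    DI (DMeta X :: d) (subst x (TVar (VMeta X)) A :: FEx x A :: G) s ->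
    DI d D (proj C d X s)
| DI_all (d : domain) (D G : list formula) (x n : nat) (A : formula)
        (s : PsiD C d) :
    Permutation D (FAll x A :: G) -> ~ In (DEig n) d ->
    DI (DEig n :: d) (subst x (TVar (VEig n)) A :: G) s ->
    DI d D s.

Inductive SDI : forall d : domain, PsiD C d -> list formula -> PsiD C d -> Prop :=
| SDI_ax (d : domain) (s : PsiD C d) (G : list formula) (s' : PsiD C d) :
    R d s (lits G) s' -> SDI d s G s'
| SDI_or (d : domain) (s : PsiD C d) (D G : list formula) (A B : formula)
         (s' : PsiD C d) :
    Permutation D (FOr A B :: G) ->
    SDI d s (A :: B :: G) s' -> SDI d s D s'
| SDI_and0 (d : domain) (s : PsiD C d) (D G : list formula) (A0 A1 : formula)
         (s'' s' : PsiD C d) :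
    Permutation D (FAnd A0 A1 :: G) ->
    SDI d s (A0 :: G) s'' -> SDI d s'' (A1 :: G) s' -> SDI d s D s'
| SDI_and1 (d : domain) (s : PsiD C d) (D G : list formula) (A0 A1 : formula)
         (s'' s' : PsiD C d) :
    Permutation D (FAnd A0 A1 :: G) ->
    SDI d s (A1 :: G) s'' -> SDI d s'' (A0 :: G) s' -> SDI d s D s'
| SDI_ex (d : domain) (s : PsiD C d) (D G : list formula) (x X : nat)
         (A : formula) (s' : Psi C (DMeta X :: d)) :
    Permutation D (FEx x A :: G) -> ~ In (DMeta X) d ->
    SDI (DMeta X :: d) (lift C d X s)
        (subst x (TVar (VMeta X)) A :: FEx x A :: G) s' ->
    SDI d s D (proj C d X s')
| SDI_all (d : domain) (s : PsiD C d) (D G : list formula) (x n : nat)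
          (A : formula) (s' : PsiD C d) :
    Permutation D (FAll x A :: G) -> ~ In (DEig n) d ->
    SDI (DEig n :: d) s (subst x (TVar (VEig n)) A :: G) s' ->
    SDI d s D s'.

End Constraints.

From Stdlib Require Import List Arith Permutation.

(* Axioms are A2; a conjunction is simulated by running
   the left premise from [s] and the right one from its output, using
   associativity of meets; an existential premise is entered with [lift s],
   and D2 together with P1 transports both the side condition and the result
   back through the projection. *)

Fixpoint term_ind_nested (Q : term -> Prop)
  (HV : forall v, Q (TVar v))
  (HF : forall f args, Forall Q args -> Q (TFun f args)) (u : term) : Q u :=
  match u with
  | TVar v => HV v
  | TFun f args => HF f args
      ((fix go (l : list term) : Forall Q l :=
          match l with
          | nil => Forall_nil _
          | a :: l' => Forall_cons _ (term_ind_nested Q HV HF a) (go l')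
          end) args)
  end.

Lemma fv_subst_term x w u v :
  In v (fv_term (subst_term x (TVar w) u)) ->
  v = w \/ In v (filter (not_bound x) (fv_term u)).
Proof.
  revert v; induction u as [[y|n|n]|f args IH] using term_ind_nested;
    intros v; simpl.
  - destruct (Nat.eqb x y) eqn:E; simpl; intros [<-|[]]; simpl; rewrite ?E; auto.
  - intros [<-|[]]; simpl; auto.
  - intros [<-|[]]; simpl; auto.
  - rewrite in_flat_map; intros (u & Hu & Hv).
    apply in_map_iff in Hu as (a & <- & Ha).
    rewrite Forall_forall in IH.
    destruct (IH a Ha v Hv) as [->|Hv']; [now left | right].
    apply filter_In in Hv' as [Hv' Hnb].
    apply filter_In; split; [apply in_flat_map; eauto | exact Hnb].
Qed.

Lemma fv_subst_lit x w l v :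
  In v (fv_lit (subst_lit x (TVar w) l)) ->
  v = w \/ In v (filter (not_bound x) (fv_lit l)).
Proof. destruct l as [p args|p args]; exact (fv_subst_term x w (TFun p args) v). Qed.

Lemma fv_subst x w A v :
  In v (fv (subst x (TVar w) A)) ->
  v = w \/ In v (filter (not_bound x) (fv A)).
Proof.
  revert v; induction A as [l|A IHA B IHB|A IHA B IHB|y A IH|y A IH];
    intros v; simpl.
  - apply fv_subst_lit.
  - rewrite filter_app, !in_app_iff.
    intros [Hv|Hv]; [destruct (IHA v Hv) | destruct (IHB v Hv)]; auto.
  - rewrite filter_app, !in_app_iff.
    intros [Hv|Hv]; [destruct (IHA v Hv) | destruct (IHB v Hv)]; auto.
  - destruct (Nat.eqb x y) eqn:E; simpl; rewrite !filter_In.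
    + apply Nat.eqb_eq in E as ->; tauto.
    + intros [Hv Hnb]; destruct (IH v Hv) as [->|Hv']; auto.
      rewrite filter_In in Hv'; tauto.
  - destruct (Nat.eqb x y) eqn:E; simpl; rewrite !filter_In.
    + apply Nat.eqb_eq in E as ->; tauto.
    + intros [Hv Hnb]; destruct (IH v Hv) as [->|Hv']; auto.
      rewrite filter_In in Hv'; tauto.
Qed.

Lemma formula_of_dom_subst d x w A :
  declared d w -> formula_of_dom d (FAll x A) ->
  formula_of_dom d (subst x (TVar w) A).
Proof. intros Hw HA v Hv; destruct (fv_subst x w A v Hv) as [->|Hv']; auto. Qed.

Lemma formula_of_dom_and d A B :
  formula_of_dom d (FAnd A B) -> formula_of_dom d A /\ formula_of_dom d B.
Proof. intros H; split; intros v Hv; apply H; simpl; auto using in_or_app. Qed.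

Lemma formula_of_dom_or d A B :
  formula_of_dom d (FOr A B) -> formula_of_dom d A /\ formula_of_dom d B.
Proof. exact (formula_of_dom_and d A B). Qed.

Lemma formula_of_dom_weaken d a A :
  formula_of_dom d A -> formula_of_dom (a :: d) A.
Proof. intros H v Hv; specialize (H v Hv); destruct v; simpl in *; auto. Qed.

Lemma ctx_of_dom_cons d A G :
  formula_of_dom d A -> ctx_of_dom d G -> ctx_of_dom d (A :: G).
Proof. intros HA HG F [<-|HF]; auto. Qed.

Lemma ctx_of_dom_weaken d a G : ctx_of_dom d G -> ctx_of_dom (a :: d) G.
Proof. intros H A HA; apply formula_of_dom_weaken, H, HA. Qed.

Lemma ctx_of_dom_perm_cons d D A G :
  Permutation D (A :: G) -> ctx_of_dom d D ->
  formula_of_dom d A /\ ctx_of_dom d G.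
Proof.
  intros HP H; split; [|intros F HF]; apply H;
    apply Permutation_in with (A :: G); simpl; auto; now symmetry.
Qed.

Lemma ctx_of_dom_open_all d D G x n A :
  Permutation D (FAll x A :: G) -> ctx_of_dom d D ->
  ctx_of_dom (DEig n :: d) (subst x (TVar (VEig n)) A :: G).
Proof.
  intros HD Hctx; destruct (ctx_of_dom_perm_cons d _ _ _ HD Hctx) as [HA HG].
  apply ctx_of_dom_cons.
  - apply formula_of_dom_subst; [simpl; auto | exact (formula_of_dom_weaken _ _ _ HA)].
  - auto using ctx_of_dom_weaken.
Qed.

Lemma ctx_of_dom_open_ex d D G x X A :
  Permutation D (FEx x A :: G) -> ctx_of_dom d D ->
  ctx_of_dom (DMeta X :: d) (subst x (TVar (VMeta X)) A :: FEx x A :: G).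
Proof.
  intros HD Hctx; destruct (ctx_of_dom_perm_cons d _ _ _ HD Hctx) as [HA HG].
  apply ctx_of_dom_cons.
  - (* [fv (FEx x A)] and [fv (FAll x A)] are the same list *)
    apply formula_of_dom_subst; [simpl; auto | exact (formula_of_dom_weaken _ _ _ HA)].
  - auto using ctx_of_dom_cons, ctx_of_dom_weaken, formula_of_dom_weaken.
Qed.

Lemma litset_of_dom_lits d G : ctx_of_dom d G -> litset_of_dom d (lits G).
Proof. intros H l Hl; exact (H (FLit l) Hl). Qed.

Lemma wf_dom_tail a d : wf_dom (a :: d) -> wf_dom d.
Proof. now inversion 1. Qed.


Section Simulation.

Variable C : mlcstruct.
Variable le : forall e, Psi C e -> Psi C e -> Prop.
Variable P : forall e, Psi C e -> Prop.
Variable R : forall d : domain, PsiD C d -> litset -> PsiD C d -> Prop.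
Variable models : forall d : domain, litset -> PsiD C d -> Prop.
Hypothesis Hdecent : decent C le P.
Hypothesis Hrelates : relates C le P R models.

Local Notation "s ⊓ t" := (meet C _ s t) (at level 40, left associativity).
Local Notation "s ≤ t" := (le _ s t) (at level 70).
Local Notation "s ≃ t" := (ceqv C le _ s t) (at level 70).

Lemma ceqv_sym e (a b : Psi C e) : a ≃ b -> b ≃ a.
Proof. now intros []. Qed.

Section Domain.

Context {d : domain} (Hwf : wf_dom d).
Implicit Types a b c : PsiD C d.

Lemma le_refl a : a ≤ a.
Proof. apply (proj1 Hdecent d Hwf). Qed.

Lemma le_trans a b c : a ≤ b -> b ≤ c -> a ≤ c.
Proof. apply (proj1 Hdecent d Hwf). Qed.

Lemma meet_lb_l a b : a ⊓ b ≤ a.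
Proof. apply (proj1 (proj2 Hdecent) d Hwf). Qed.

Lemma meet_lb_r a b : a ⊓ b ≤ b.
Proof. apply (proj1 (proj2 Hdecent) d Hwf). Qed.

Lemma meet_glb a b c : c ≤ a -> c ≤ b -> c ≤ a ⊓ b.
Proof. apply (proj1 (proj2 Hdecent) d Hwf). Qed.

Lemma ceqv_refl a : a ≃ a.
Proof. split; apply le_refl. Qed.

Lemma ceqv_trans a b c : a ≃ b -> b ≃ c -> a ≃ c.
Proof. intros [] []; split; eapply le_trans; eauto. Qed.

Lemma meet_le a a' b b' : a ≤ a' -> b ≤ b' -> a ⊓ b ≤ a' ⊓ b'.
Proof.
  intros Ha Hb; apply meet_glb.
  - exact (le_trans _ _ _ (meet_lb_l a b) Ha).
  - exact (le_trans _ _ _ (meet_lb_r a b) Hb).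
Qed.

Lemma ceqv_meet_l a a' b : a ≃ a' -> a ⊓ b ≃ a' ⊓ b.
Proof. intros []; split; apply meet_le; auto using le_refl. Qed.

Lemma meet_assoc a b c : a ⊓ (b ⊓ c) ≃ a ⊓ b ⊓ c.
Proof.
  split; repeat apply meet_glb; eauto 6 using le_trans, meet_lb_l, meet_lb_r.
Qed.

Lemma P_le a b : P _ a -> a ≤ b -> P _ b.
Proof. apply (proj2 (proj2 (proj2 (proj2 Hdecent))) d Hwf). Qed.

Lemma P_ceqv a b : P _ a -> a ≃ b -> P _ b.
Proof. intros Ha []; eapply P_le; eauto. Qed.

End Domain.

Definition simulated (d : domain) (G : list formula) (s' : PsiD C d) : Prop :=
  forall s : PsiD C d, P _ (s ⊓ s') ->
    exists s'' : PsiD C d, s'' ≃ s ⊓ s' /\ SDI C R d s G s''.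

Lemma simulated_ax d G s' :
  wf_dom d -> ctx_of_dom d G -> models d (lits G) s' -> simulated d G s'.
Proof.
  intros Hwf Hctx Hmod s HP.
  destruct (proj2 (Hrelates d Hwf _ (litset_of_dom_lits d G Hctx) s) s' HP Hmod)
    as (s'' & Heq & HR).
  exists s''; split; [exact Heq | now apply SDI_ax].
Qed.

Lemma simulated_and d D G A B sA sB :
  wf_dom d -> Permutation D (FAnd A B :: G) ->
  simulated d (A :: G) sA -> simulated d (B :: G) sB ->
  simulated d D (sA ⊓ sB).
Proof.
  intros Hwf HD HA HB s HP.
  assert (HPA : P _ (s ⊓ sA))
    by exact (P_le Hwf _ _ HP (meet_le Hwf _ _ _ _ (le_refl Hwf s) (meet_lb_l Hwf sA sB))).
  destruct (HA s HPA) as (t & Ht & HSA).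
  assert (Hassoc : s ⊓ (sA ⊓ sB) ≃ t ⊓ sB)
    by exact (ceqv_trans Hwf _ _ _ (meet_assoc Hwf s sA sB)
                (ceqv_meet_l Hwf _ _ sB (ceqv_sym _ _ _ Ht))).
  destruct (HB t (P_ceqv Hwf _ _ HP Hassoc)) as (u & Hu & HSB).
  exists u; split.
  - eapply ceqv_trans, ceqv_sym; eauto.
  - eapply SDI_and0; eauto.
Qed.

Lemma simulated_or d D G A B s' :
  Permutation D (FOr A B :: G) -> simulated d (A :: B :: G) s' ->
  simulated d D s'.
Proof.
  intros HD HAB s HP; destruct (HAB s HP) as (s'' & Heq & HS).
  exists s''; split; [exact Heq | eapply SDI_or; eauto].
Qed.

Lemma simulated_ex d D G x X A (s' : Psi C (DMeta X :: d)) :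
  wf_dom (DMeta X :: d) -> Permutation D (FEx x A :: G) -> ~ In (DMeta X) d ->
  simulated (DMeta X :: d) (subst x (TVar (VMeta X)) A :: FEx x A :: G) s' ->
  simulated d D (proj C d X s').
Proof.
  intros HwfX HD HX Hbody s HP.
  destruct Hdecent as (_ & _ & HD2 & HP1 & _).
  assert (Hwf : wf_dom d) by exact (wf_dom_tail _ _ HwfX).
  assert (Hlift : proj C d X (lift C d X s ⊓ s') ≃ s ⊓ proj C d X s')
    by exact (HD2 d X HwfX s s' _ (ceqv_refl HwfX _)).
  assert (HPlift : P _ (lift C d X s ⊓ s'))
    by apply (HP1 d X HwfX), (P_ceqv Hwf _ _ HP), ceqv_sym, Hlift.
  destruct (Hbody _ HPlift) as (t & Ht & HS).
  exists (proj C d X t); split.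
  - exact (HD2 d X HwfX s s' t Ht).
  - eapply SDI_ex; eauto.
Qed.

Lemma simulated_all d D G x n A s' :
  Permutation D (FAll x A :: G) -> ~ In (DEig n) d ->
  simulated (DEig n :: d) (subst x (TVar (VEig n)) A :: G) s' ->
  simulated d D s'.
Proof.
  intros HD Hn Hbody s HP; destruct (Hbody s HP) as (s'' & Heq & HS).
  exists s''; split; [exact Heq | eapply SDI_all; eauto].
Qed.

Lemma DI_simulated d G s' :
  wf_dom d -> ctx_of_dom d G -> DI C models d G s' -> simulated d G s'.
Proof.
  intros Hwf Hctx HDI; revert Hwf Hctx.
  induction HDI as [d G s Hmod|d D G A B sA sB HD _ IHA _ IHB
                   |d D G A B s HD _ IH|d D G x X A s HD HX _ IH
                   |d D G x n A s HD Hn _ IH];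
    intros Hwf Hctx.
  - now apply simulated_ax.
  - destruct (ctx_of_dom_perm_cons d _ _ _ HD Hctx) as [HAB HG].
    destruct (formula_of_dom_and _ _ _ HAB) as [HA HB].
    eapply simulated_and; eauto using ctx_of_dom_cons.
  - destruct (ctx_of_dom_perm_cons d _ _ _ HD Hctx) as [HAB HG].
    destruct (formula_of_dom_or _ _ _ HAB) as [HA HB].
    eapply simulated_or; eauto using ctx_of_dom_cons.
  - assert (HwfX : wf_dom (DMeta X :: d)) by now constructor.
    eapply simulated_ex; eauto using ctx_of_dom_open_ex.
  - eapply simulated_all; eauto.
    apply IH; [now constructor | eapply ctx_of_dom_open_all; eauto].
Qed.

End Simulation.

Theorem mainTheorem6
  (C : mlcstruct)
  (le : forall e, Psi C e -> Psi C e -> Prop)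
  (P : forall e, Psi C e -> Prop)
  (R : forall d : domain, PsiD C d -> litset -> PsiD C d -> Prop)
  (models : forall d : domain, litset -> PsiD C d -> Prop) :
  decent C le P ->
  relates C le P R models ->
  forall (d : domain) (G : list formula) (s' : PsiD C d),
    wf_dom d -> ctx_of_dom d G ->
    DI C models d G s' ->
    forall s : PsiD C d,
      P (cdom d) (meet C _ s s') ->
      exists s'' : PsiD C d,
        ceqv C le (cdom d) s'' (meet C _ s s') /\ SDI C R d s G s''.
Proof.
  intros Hdecent Hrelates d G s' Hwf Hctx HDI.
  exact (DI_simulated C le P R models Hdecent Hrelates d G s' Hwf Hctx HDI).
Qed.
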